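(* For all $\mathbf u\in\{0,1\}^{\mathbb N}$: $\inf(L(\mathbf u))=L(\inf(\mathbf u))$, $\inf(R(\mathbf u))=R(\inf(\mathbf u))$, and $0\,\sup(L(\mathbf u))=L(\sup(\mathbf u))$. If $\inf(\mathbf u)=\inf_1(\mathbf u)$, then $\inf(M(\mathbf u))=0\,M(\inf(\mathbf u))$. If $\sup(\mathbf u)=\sup_0(\mathbf u)$, then $\sup(R(\mathbf u))=1\,R(\sup(\mathbf u))$ and $\sup(M(\mathbf u))=1\,M(\sup(\mathbf u))$. Moreover: (a) For each $\sigma\in\{L,M,R\}^*$ there is a suffix $w$ of $\sigma(1)$ such that $\inf_1(\sigma(\mathbf u))=\inf(\sigma(\mathbf u))=w\,\sigma(\inf(\mathbf u))$ for all $\mathbf u\in\{0,1\}^{\mathbb N}$ with $\inf(\mathbf u)=\inf_1(\mathbf u)$. (b) For each $\sigma\in\{L,M,R\}^*M\cup\{L,M,R\}^*R$ there is a suffix $w$ of $\sigma(0)$ such that $\sup_0(\sigma(\mathbf u))=\sup(\sigma(\mathbf u))=w\,\sigma(\sup(\mathbf u))$ for all $\mathbf u\in\{0,1\}^{\mathbb N}$ with $\sup(\mathbf u)=\sup_0(\mathbf u)$. (c) For each $\sigma\in\{L,M,R\}^*L$ there is a prefix $w$ of $\sigma(\overline0)$ such that $w\,\sup_0(\sigma(\mathbf u))=w\,\sup(\sigma(\mathbf u))=\sigma(\sup(\mathbf u))$ for all $\mathbf u\in\{0,1\}^{\mathbb N}$ with $\sup(\mathbf u)=\sup_0(\mathbf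 u)$.
   Context: Infinite words over $\{0,1\}$ are ordered lexicographically; $\overline{w}$ denotes infinite repetition of $w$. For $\mathbf u=u_1u_2\cdots\in\{0,1\}^{\mathbb N}$, $\sup(\mathbf u)$ and $\inf(\mathbf u)$ are the lexicographic supremum and infimum of $\{u_ku_{k+1}\cdots:k\ge1\}$, $\inf_1(\mathbf u)=\inf\{u_{k+1}u_{k+2}\cdots:k\ge1,\ u_k=1\}$ and $\sup_0(\mathbf u)=\sup\{u_{k+1}u_{k+2}\cdots:k\ge1,\ u_k=0\}$. The substitutions (monoid morphisms on words, extended letterwise to infinite words) are $L:0\mapsto0,1\mapsto01$; $M:0\mapsto01,1\mapsto10$; $R:0\mapsto01,1\mapsto1$. $\{L,M,R\}^*$ is the monoid generated by them under composition (including the identity); $\{L,M,R\}^*X=\{\tau X:\tau\in\{L,M,R\}^*\}$ for $X\in\{L,M,R\}$. *)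

From mathcomp Require Import all_boot.
From Stdlib Require Import ClassicalEpsilon.
Set Implicit Arguments. Unset Strict Implicit. Unset Printing Implicit Defensive.

(* Letters: false = 0, true = 1.  Infinite words are indexed from 0
   (position i here is position i+1 in the paper). *)
Definition word := nat -> bool.

Definition lex_lt (u v : word) : Prop :=
  exists n, (forall i, i < n -> u i = v i) /\ u n = false /\ v n = true.
Definition lex_le (u v : word) : Prop := u = v \/ lex_lt u v.

Definition is_lub (S : word -> Prop) (w : word) : Prop :=
  (forall v, S v -> lex_le v w) /\
  (forall z, (forall v, S v -> lex_le v z) -> lex_le w z).
Definition is_glb (S : word -> Prop) (w : word) : Prop :=
  (forall v, S v -> lex_le w v) /\
  (forall z, (forall v, S v -> lex_le z v) -> lex_le z w).

(* Lexicographic supremum / infimum of a set of infinite words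
   ({0,1}^N is a complete lattice for the lexicographic order). *)
Definition lsup (S : word -> Prop) : word :=
  epsilon (inhabits (fun _ => false)) (is_lub S).
Definition linf (S : word -> Prop) : word :=
  epsilon (inhabits (fun _ => false)) (is_glb S).

Definition suffixes (u : word) (v : word) : Prop :=
  exists k, v = (fun i => u (k + i)).
Definition suffixes_after1 (u : word) (v : word) : Prop :=
  exists k, u k = true /\ v = (fun i => u (k.+1 + i)).
Definition suffixes_after0 (u : word) (v : word) : Prop :=
  exists k, u k = false /\ v = (fun i => u (k.+1 + i)).

Definition wsup (u : word) : word := lsup (suffixes u).
Definition winf (u : word) : word := linf (suffixes u).
Definition winf1 (u : word) : word := linf (suffixes_after1 u).
Definition wsup0 (u : word) : word := lsup (suffixes_after0 u).

Definition wcat (w : seq bool) (u : word) : word :=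
  fun n => if n < size w then nth false w n else u (n - size w).

Inductive gen := GL | GM | GR.

Definition gimg (g : gen) (a : bool) : seq bool :=
  match g, a with
  | GL, false => [:: false]
  | GL, true  => [:: false; true]
  | GM, false => [:: false; true]
  | GM, true  => [:: true; false]
  | GR, false => [:: false; true]
  | GR, true  => [:: true]
  end.

Definition gfin (g : gen) (w : seq bool) : seq bool := flatten (map (gimg g) w).

(* Morphism extended letterwise to an infinite word: since every image is
   nonempty, letter n of g(u) lies in g(u_0 ... u_n). *)
Definition ginf (g : gen) (u : word) : word :=
  fun n => nth false (flatten (map (gimg g) (mkseq u n.+1))) n.

(* An element sigma = X_1 X_2 ... X_k of {L,M,R}^* is a list of generators,
   acting by composition: sigma(x) = X_1(X_2(... X_k(x))). The empty list
   is the identity. *)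
Definition sfin (s : seq gen) (w : seq bool) : seq bool := foldr gfin w s.
Definition sinf (s : seq gen) (u : word) : word := foldr ginf u s.

Definition prefix_of_inf (w : seq bool) (u : word) : Prop :=
  forall i, i < size w -> nth false w i = u i.

Definition zeros : word := fun _ => false.

From mathcomp Require Import all_boot zify.
From Stdlib Require Import ClassicalEpsilon Classical FunctionalExtensionality.
Set Implicit Arguments. Unset Strict Implicit. Unset Printing Implicit Defensive.

(* Every suffix of [X(u)] is a suffix of the image of one letter followed by
   [X(v)], [v] a suffix of [u]. Each generator is strictly increasing for the
   lexicographic order, so among these candidates the extremal one is, up to a
   one-letter prefix, the image of the extremal suffix of [u]; the hypotheses
   [inf = inf_1] and [sup = sup_0] eliminate the candidates starting inside the
   image of a letter, and each generator preserves them. An extremum is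
   recognised as a bound that is the image, under a non-expansive map, of a
   word in the closure of a set mapped into the candidates. *)

Definition agree n (u v : word) := forall i, i < n -> u i = v i.

Lemma agree_sym n u v : agree n u v -> agree n v u.
Proof. by move=> H i Hi; rewrite H. Qed.

Lemma agree_le m n u v : m <= n -> agree n u v -> agree m u v.
Proof. by move=> Hmn H i Hi; apply: H; apply: leq_trans Hmn. Qed.

Lemma lex_ltxx u : ~ lex_lt u u.
Proof. by case=> n [_ [h1 h2]]; rewrite h1 in h2. Qed.

Lemma lex_lt_trans u v w : lex_lt u v -> lex_lt v w -> lex_lt u w.
Proof.
case=> n [a1 [b1 c1]] [m [a2 [b2 c2]]].
case: (ltngtP n m) => h.
- exists n; split; last split => //.
  + by move=> i Hi; rewrite a1 // a2 // (ltn_trans Hi h).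
  + by rewrite -a2.
- exists m; split; last split => //.
  + by move=> i Hi; rewrite a1 ?a2 // (ltn_trans Hi h).
  + by rewrite a1.
- by subst; rewrite c1 in b2.
Qed.

Lemma first_mismatch u v : u <> v -> exists n, agree n u v /\ u n != v n.
Proof.
move=> neq.
have [i Hi]: exists i, u i != v i.
  apply: NNPP => H; apply: neq; apply: functional_extensionality => i.
  by apply/eqP; apply: contra_notT H => Hi; exists i.
case: (@ex_minnP (fun i => u i != v i) (ex_intro _ i Hi)) => n Hn Hmin.
exists n; split => // j Hj.
by apply/eqP; apply: contraTT Hj => /Hmin; rewrite -leqNgt.
Qed.

Lemma lex_trichotomy u v : u = v \/ lex_lt u v \/ lex_lt v u.
Proof.
case: (classic (u = v)) => [->|neq]; first by left.
right; case: (first_mismatch neq) => n [Ha]; case Eu: (u n); case Ev: (v n) => // _.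
- by right; exists n; split; [exact: agree_sym|].
- by left; exists n.
Qed.

Lemma lex_lexx u : lex_le u u.
Proof. by left. Qed.

Lemma lex_ltW u v : lex_lt u v -> lex_le u v.
Proof. by right. Qed.

Lemma lex_le_lt_trans u v w : lex_le u v -> lex_lt v w -> lex_lt u w.
Proof. by case=> [->//|h1] h2; apply: lex_lt_trans h1 h2. Qed.

Lemma lex_lt_le_trans u v w : lex_lt u v -> lex_le v w -> lex_lt u w.
Proof. by move=> h1 [<-//|h2]; apply: lex_lt_trans h1 h2. Qed.

Lemma lex_le_trans u v w : lex_le u v -> lex_le v w -> lex_le u w.
Proof. by case=> [->//|h1] h2; right; apply: lex_lt_le_trans h1 h2. Qed.

Lemma lex_leNgt u v : lex_le u v <-> ~ lex_lt v u.
Proof.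
split; first by move=> h1 h2; apply: (@lex_ltxx u); apply: lex_le_lt_trans h1 h2.
by move=> H; case: (lex_trichotomy u v) => [->|[h|h]]; [left|right|].
Qed.

Lemma lex_le_anti u v : lex_le u v -> lex_le v u -> u = v.
Proof. by case=> // h1 /lex_leNgt. Qed.

Lemma lex_lt_head x y : x 0 = false -> y 0 = true -> lex_lt x y.
Proof. by exists 0. Qed.

Lemma lex_le_head x y : lex_le x y -> x 0 = true -> y 0 = true.
Proof.
case=> [->//|[[|n] [a [b c]]]] H; first by rewrite H in b.
by rewrite -a.
Qed.

Lemma lex_lt_prefixl w z : lex_lt w z -> exists n, forall t, agree n t w -> lex_lt t z.
Proof.
case=> n [a [b c]]; exists n.+1 => t At; exists n; split; last split => //.
- by move=> i Hi; rewrite At ?a // (ltn_trans Hi).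
- by rewrite At.
Qed.

Lemma lex_lt_prefixr w z : lex_lt w z -> exists n, forall t, agree n t z -> lex_lt w t.
Proof.
case=> n [a [b c]]; exists n.+1 => t At; exists n; split; last split => //.
- by move=> i Hi; rewrite At ?a // (ltn_trans Hi).
- by rewrite At.
Qed.

Lemma const_or_has b (v : word) : v = (fun _ => b) \/ exists k, v k = ~~ b.
Proof.
case: (classic (exists k, v k = ~~ b)) => H; [by right|left].
apply: functional_extensionality => k; case E: (v k); case: b H E => //= H E;
  by case: H; exists k.
Qed.

Definition ones : word := fun _ => true.

Lemma ones_max x : lex_le x ones.
Proof.
case: (classic (x = ones)) => [->|neq]; first exact: lex_lexx.
right; case: (first_mismatch neq) => n [a b]; exists n; split => //.
by move: b; rewrite /ones; case: (x n).
Qed.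

Lemma zeros_min x : lex_le zeros x.
Proof.
case: (classic (zeros = x)) => [->|neq]; first exact: lex_lexx.
right; case: (first_mismatch neq) => n [a b]; exists n; split => //.
by move: b; rewrite /zeros; case: (x n).
Qed.

Definition in_closure (S : word -> Prop) w := forall n, exists t, S t /\ agree n t w.

Lemma is_glb_closure S w :
  (forall t, S t -> lex_le w t) -> in_closure S w -> is_glb S w.
Proof.
move=> Hlb Hcl; split => // z Hz; apply/lex_leNgt => /lex_lt_prefixl [n Hn].
case: (Hcl n) => t [St At].
exact: (iffLR (lex_leNgt _ _) (Hz t St) (Hn t At)).
Qed.

Lemma is_lub_closure S w :
  (forall t, S t -> lex_le t w) -> in_closure S w -> is_lub S w.
Proof.
move=> Hub Hcl; split => // z Hz; apply/lex_leNgt => /lex_lt_prefixr [n Hn].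
case: (Hcl n) => t [St At].
exact: (iffLR (lex_leNgt _ _) (Hz t St) (Hn t At)).
Qed.

Lemma is_glb_unique S a b : is_glb S a -> is_glb S b -> a = b.
Proof. by move=> [h1 h2] [h3 h4]; apply: lex_le_anti; [apply: h4|apply: h2]. Qed.

Lemma is_lub_unique S a b : is_lub S a -> is_lub S b -> a = b.
Proof. by move=> [h1 h2] [h3 h4]; apply: lex_le_anti; [apply: h2|apply: h4]. Qed.

Lemma linfE S w : is_glb S w -> linf S = w.
Proof.
move=> H; apply: (is_glb_unique _ H); apply: epsilon_spec; by exists w.
Qed.

Lemma lsupE S w : is_lub S w -> lsup S = w.
Proof.
move=> H; apply: (is_lub_unique _ H); apply: epsilon_spec; by exists w.
Qed.

Definition asbool (P : Prop) : bool :=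
  if excluded_middle_informative P then true else false.

Lemma asboolE (P : Prop) : asbool P = true <-> P.
Proof. by rewrite /asbool; case: excluded_middle_informative. Qed.

(* The greatest lower bound is built bit by bit: its bit [n] is [0] exactly
   when some element of [S] extends the [n] bits already chosen by a [0]. *)
Fixpoint glb_prefix (S : word -> Prop) n : seq bool :=
  if n is n'.+1 then
    let p := glb_prefix S n' in
    rcons p (~~ asbool (exists s, S s /\ prefix_of_inf p s /\ s (size p) = false))
  else [::].

Definition glb_word S : word := fun i => nth false (glb_prefix S i.+1) i.

Lemma size_glb_prefix S n : size (glb_prefix S n) = n.
Proof. by elim: n => //= n IH; rewrite size_rcons IH. Qed.

Lemma nth_glb_prefix S n m i :
  i < n -> n <= m -> nth false (glb_prefix S m) i = nth false (glb_prefix S n) i.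
Proof.
move=> Hi; elim: m => [|m IH]; first by rewrite leqn0 => /eqP E; rewrite E ltn0 in Hi.
rewrite leq_eqVlt => /orP [/eqP <-//|Hnm].
by rewrite /= nth_rcons size_glb_prefix (leq_trans Hi Hnm) IH.
Qed.

Lemma glb_word_bit S n :
  glb_word S n =
  ~~ asbool (exists s, S s /\ prefix_of_inf (glb_prefix S n) s /\ s n = false).
Proof. by rewrite /glb_word /= nth_rcons size_glb_prefix ltnn eqxx. Qed.

Lemma prefix_glb_prefix S n s :
  prefix_of_inf (glb_prefix S n) s <-> agree n s (glb_word S).
Proof.
have E i : i < n -> nth false (glb_prefix S n) i = glb_word S i.
  by move=> Hi; rewrite /glb_word (@nth_glb_prefix S i.+1 n i).
split=> H i; rewrite ?size_glb_prefix => Hi.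
- by rewrite -H ?size_glb_prefix // E.
- by rewrite H // E.
Qed.

Lemma is_glb_glb_word S : is_glb S (glb_word S).
Proof.
split.
- move=> t St; apply/lex_leNgt => -[n [a [b]]].
  rewrite glb_word_bit => /negP; apply; apply/asboolE.
  by exists t; split => //; split => //; apply/prefix_glb_prefix.
- move=> z Hz; apply/lex_leNgt => -[n [a [+ c]]].
  rewrite glb_word_bit => /negbFE /asboolE [s [Ss [Ps Hs]]].
  apply: (iffLR (lex_leNgt _ _) (Hz s Ss)); exists n; split; last split => //.
  by move/prefix_glb_prefix: Ps => Ps i Hi; rewrite Ps // a.
Qed.

Lemma glb_word_closure S : (exists s, S s) -> in_closure S (glb_word S).
Proof.
move=> [s0 S0] n.
suff [s [Ss Ps]] : exists s, S s /\ prefix_of_inf (glb_prefix S n) s.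
  by exists s; split => //; apply/prefix_glb_prefix.
elim: n => [|n [s [Ss Ps]]]; first by exists s0; split => // i.
pose P := exists t, S t /\ prefix_of_inf (glb_prefix S n) t /\ t n = false.
have extend t : S t -> prefix_of_inf (glb_prefix S n) t -> t n = glb_word S n ->
    exists s, S s /\ prefix_of_inf (glb_prefix S n.+1) s.
  move=> St Pt Ht; exists t; split => //; apply/prefix_glb_prefix => i.
  rewrite ltnS leq_eqVlt => /orP [/eqP ->//|].
  exact: (iffLR (prefix_glb_prefix _ _ _) Pt).
case: (classic P) => [HP|HnP].
- case: (HP) => t [St [Pt Ht]].
  by apply: (extend t) => //; rewrite glb_word_bit Ht; have /asboolE -> : P by [].
- apply: (extend s) => //; rewrite glb_word_bit.
  have -> : asbool P = false by apply/negbTE/negP => /asboolE.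
  by case Es: (s n) => //; case: HnP; exists s.
Qed.

Definition wcompl (u : word) : word := fun i => ~~ u i.

Lemma wcomplK u : wcompl (wcompl u) = u.
Proof. by apply: functional_extensionality => i; rewrite /wcompl negbK. Qed.

Lemma lex_le_wcompl u v : lex_le u v -> lex_le (wcompl v) (wcompl u).
Proof.
case=> [->|[n [a [b c]]]]; [by left|right]; exists n.
by split; [move=> i Hi; rewrite /wcompl a | rewrite /wcompl b c].
Qed.

Lemma is_lub_wcompl S w : is_glb (fun x => S (wcompl x)) w -> is_lub S (wcompl w).
Proof.
case=> h1 h2; split.
- move=> v Sv; rewrite -(wcomplK v) in Sv.
  by have /lex_le_wcompl := h1 _ Sv; rewrite wcomplK.
- move=> z Hz; rewrite -(wcomplK z); apply: lex_le_wcompl; apply: h2 => x Sx.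
  by have /lex_le_wcompl := Hz _ Sx; rewrite wcomplK.
Qed.

Lemma in_closure_wcompl S w :
  in_closure (fun x => S (wcompl x)) w -> in_closure S (wcompl w).
Proof.
move=> H n; case: (H n) => t [St At]; exists (wcompl t); split => //.
by move=> i Hi; rewrite /wcompl At.
Qed.

Lemma linf_glb S : is_glb S (linf S).
Proof. by rewrite (linfE (is_glb_glb_word S)); apply: is_glb_glb_word. Qed.

Lemma lsup_lub S : is_lub S (lsup S).
Proof.
have H := is_lub_wcompl (is_glb_glb_word (fun x => S (wcompl x))).
by rewrite (lsupE H).
Qed.

Lemma linf_closure S : (exists s, S s) -> in_closure S (linf S).
Proof. by rewrite (linfE (is_glb_glb_word S)); apply: glb_word_closure. Qed.

Lemma lsup_closure S : (exists s, S s) -> in_closure S (lsup S).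
Proof.
move=> [s Ss]; rewrite (lsupE (is_lub_wcompl (is_glb_glb_word _))).
by apply/in_closure_wcompl/glb_word_closure; exists (wcompl s); rewrite wcomplK.
Qed.

Lemma linf_le S t : S t -> lex_le (linf S) t.
Proof. by case: (linf_glb S) => h _; apply: h. Qed.

Lemma lsup_ge S t : S t -> lex_le t (lsup S).
Proof. by case: (lsup_lub S) => h _; apply: h. Qed.

Definition shift k (u : word) : word := fun i => u (k + i).

Lemma shift0 x : shift 0 x = x.
Proof. by apply: functional_extensionality. Qed.

Lemma shiftD a b x : shift a (shift b x) = shift (b + a) x.
Proof. by apply: functional_extensionality => i; rewrite /shift addnA. Qed.

Lemma shiftS k (v : word) : shift 1 (shift k v) = shift k.+1 v.
Proof. by rewrite shiftD addn1. Qed.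

Lemma shift_at0 k (v : word) : shift k v 0 = v k.
Proof. by rewrite /shift addn0. Qed.

Lemma wcat_nil x : wcat [::] x = x.
Proof. by apply: functional_extensionality => n; rewrite /wcat /= subn0. Qed.

Lemma wcat_at0 b w x : wcat (b :: w) x 0 = b.
Proof. by []. Qed.

Lemma wcat_cat a b x : wcat a (wcat b x) = wcat (a ++ b) x.
Proof.
apply: functional_extensionality => n; rewrite /wcat size_cat nth_cat.
case: (ltnP n (size a)) => H; first by rewrite ltn_addr.
by rewrite ltn_subLR // subnDA.
Qed.

Lemma shift_wcat w x : shift (size w) (wcat w x) = x.
Proof.
apply: functional_extensionality => i; rewrite /shift /wcat.
by rewrite ltnNge leq_addr /= addKn.
Qed.

Lemma shift_wcat_drop j w x : j <= size w -> shift j (wcat w x) = wcat (drop j w) x.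
Proof.
move=> H; rewrite -{1}(cat_take_drop j w) -wcat_cat.
by rewrite -{1}(size_takel H) shift_wcat.
Qed.

Lemma wcat_inj w x y : wcat w x = wcat w y -> x = y.
Proof. by move=> H; rewrite -(shift_wcat w x) H shift_wcat. Qed.

Lemma wcat_shift k (v : word) : shift k v = wcat [:: v k] (shift k.+1 v).
Proof.
apply: functional_extensionality => -[|i]; rewrite /wcat /shift /= ?addn0 //.
by rewrite subn1 addSnnS.
Qed.

Lemma wcat_agree w x y n : agree n x y -> agree (size w + n) (wcat w x) (wcat w y).
Proof.
move=> H i Hi; rewrite /wcat; case: ltnP => // Hw; apply: H.
by rewrite ltn_subLR.
Qed.

Lemma lex_lt_wcat w x y : lex_lt x y -> lex_lt (wcat w x) (wcat w y).
Proof.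
case=> n [a [b c]]; exists (size w + n); split.
- move=> i Hi; rewrite /wcat; case: ltnP => // Hw; apply: a; by rewrite ltn_subLR.
- by rewrite /wcat ltnNge leq_addr /= addKn b c.
Qed.

Lemma lex_le_wcat w x y : lex_le x y -> lex_le (wcat w x) (wcat w y).
Proof. by case=> [->|h]; [left|right; apply: lex_lt_wcat]. Qed.

Lemma wcat_prefix w x : prefix_of_inf w x -> x = wcat w (shift (size w) x).
Proof.
move=> H; apply: functional_extensionality => i; rewrite /wcat /shift.
by case: ltnP => Hi; [rewrite H|rewrite subnKC].
Qed.

Lemma prefix_of_inf_wcat w y z :
  prefix_of_inf y z -> prefix_of_inf (w ++ y) (wcat w z).
Proof.
move=> H i; rewrite size_cat nth_cat /wcat => Hi; case: ltnP => // Hw.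
by apply: H; rewrite -ltn_subLR in Hi.
Qed.

Lemma prefix_of_inf_catl a b x : prefix_of_inf (a ++ b) x -> prefix_of_inf a x.
Proof.
move=> H i Hi; rewrite -H; first by rewrite nth_cat Hi.
by rewrite size_cat ltn_addr.
Qed.

Lemma size_gimg_gt0 g b : 0 < size (gimg g b).
Proof. by case: g; case: b. Qed.

Lemma size_gfin g s : size s <= size (gfin g s).
Proof.
elim: s => //= b s IH; rewrite size_cat -add1n leq_add //; exact: size_gimg_gt0.
Qed.

Lemma gfin_cons g b w : gfin g (b :: w) = gimg g b ++ gfin g w.
Proof. by []. Qed.

Lemma gfin_cat g a b : gfin g (a ++ b) = gfin g a ++ gfin g b.
Proof. by rewrite /gfin map_cat flatten_cat. Qed.

Lemma mkseqD (u : word) a b : mkseq u (a + b) = mkseq u a ++ mkseq (shift a u) b.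
Proof.
rewrite /mkseq iotaD map_cat; congr (_ ++ _).
by rewrite add0n -{1}(addn0 a) iotaDl -map_comp; apply: eq_map => i /=; rewrite /shift.
Qed.

Lemma nth_gfin_mkseq g u m i : i < m -> nth false (gfin g (mkseq u m)) i = ginf g u i.
Proof.
move=> H; rewrite /ginf -/(gfin _ _) -(subnKC H) mkseqD gfin_cat nth_cat.
by rewrite (leq_trans _ (size_gfin g _)) // size_mkseq.
Qed.

Lemma ginf_cons g u : ginf g u = wcat (gimg g (u 0)) (ginf g (shift 1 u)).
Proof.
apply: functional_extensionality => n.
rewrite /wcat {1}/ginf -add1n mkseqD /= nth_cat.
case: ltnP => // H; rewrite nth_gfin_mkseq //.
by have := size_gimg_gt0 g (u 0); lia.
Qed.

Lemma ginf_shift_cons g v k :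
  ginf g (shift k v) = wcat (gimg g (v k)) (ginf g (shift k.+1 v)).
Proof. by rewrite ginf_cons shift_at0 shiftS. Qed.

Lemma ginf_at0 g x : ginf g x 0 = head false (gimg g (x 0)).
Proof. by rewrite ginf_cons /wcat size_gimg_gt0; case: (gimg g (x 0)). Qed.

Lemma ginf_wcat g w x : ginf g (wcat w x) = wcat (gfin g w) (ginf g x).
Proof.
elim: w => [|b w IH]; first by rewrite !wcat_nil.
rewrite ginf_cons wcat_at0 -cat1s -wcat_cat (shift_wcat [:: b]) IH wcat_cat.
by rewrite cat1s.
Qed.

Lemma ginf_agree g n u v : agree n u v -> agree n (ginf g u) (ginf g v).
Proof.
move=> H i Hi; rewrite /ginf.
have -> : mkseq u i.+1 = mkseq v i.+1; last by [].
apply/eq_in_map => j; rewrite mem_iota => /andP [_ Hj].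
by apply: H; apply: leq_trans Hj _.
Qed.

Lemma prefix_of_inf_ginf g w x :
  prefix_of_inf w x -> prefix_of_inf (gfin g w) (ginf g x).
Proof.
move=> H; rewrite (wcat_prefix H) ginf_wcat -{1}(cats0 (gfin g w)).
by apply: prefix_of_inf_wcat => i.
Qed.

(* For [L] this uses that every [L(x)] starts with [0]. *)
Lemma lex_lt_ginf g u v : lex_lt u v -> lex_lt (ginf g u) (ginf g v).
Proof.
case=> n; elim: n u v => [|n IH] u v [a [b c]].
  rewrite (ginf_cons g u) (ginf_cons g v) b c.
  case: g; [|exact: lex_lt_head|exact: lex_lt_head].
  exists 1; split; first by move=> [|i] //; rewrite /wcat.
  by rewrite /wcat /= subnn ginf_at0; case: (shift 1 u 0).
rewrite (ginf_cons g u) (ginf_cons g v) (a 0 _) //; apply: lex_lt_wcat; apply: IH.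
by split; [move=> i Hi; rewrite /shift a | split].
Qed.

Lemma lex_le_ginf g u v : lex_le u v -> lex_le (ginf g u) (ginf g v).
Proof. by case=> [->|h]; [left|right; apply: lex_lt_ginf]. Qed.

Lemma ginf_GL_zeros : ginf GL zeros = zeros.
Proof.
have E: ginf GL zeros = wcat [:: false] (ginf GL zeros).
  by rewrite {1}ginf_cons.
apply: functional_extensionality => n; elim: n => [|n IH]; first by rewrite E.
by rewrite E /wcat /= subn1 /= IH.
Qed.

Lemma ginf_GL_at0 x : ginf GL x 0 = false.
Proof. by rewrite ginf_at0; case: (x 0). Qed.

Definition after b (u v : word) := exists k, u k = b /\ v = shift k.+1 u.

Lemma suffixes_shift v k : suffixes v (shift k v).
Proof. by exists k. Qed.

Lemma suffixes_refl v : suffixes v v.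
Proof. by exists 0. Qed.

Lemma shift_ginf_shift g v k : exists K, shift K (ginf g v) = ginf g (shift k v).
Proof.
elim: k v => [|k IH] v; first by exists 0; rewrite !shift0.
case: (IH (shift 1 v)) => K HK; exists (size (gimg g (v 0)) + K).
by rewrite -shiftD (ginf_cons g v) shift_wcat HK shiftD.
Qed.

Lemma suffixes_ginf_shift g v k : suffixes (ginf g v) (ginf g (shift k v)).
Proof. by case: (shift_ginf_shift g v k) => K <-; exists K. Qed.

Lemma shift_ginfE g v K : exists k j, j < size (gimg g (v k)) /\
  shift K (ginf g v) = wcat (drop j (gimg g (v k))) (ginf g (shift k.+1 v)).
Proof.
elim: K {-2}K (leqnn K) v => [|n IH] K HK v.
  move: HK; rewrite leqn0 => /eqP ->; exists 0, 0; split; first exact: size_gimg_gt0.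
  by rewrite shift0 drop0 -ginf_cons.
case: (ltnP K (size (gimg g (v 0)))) => H.
  exists 0, K; split => //.
  by rewrite {1}(ginf_cons g v) shift_wcat_drop // ltnW.
have HK' : K - size (gimg g (v 0)) <= n by have := size_gimg_gt0 g (v 0); lia.
case: (IH _ HK' (shift 1 v)) => k [j [Hj E]]; exists k.+1, j; split => //.
by rewrite -(subnKC H) -shiftD {1}(ginf_cons g v) shift_wcat E shiftD.
Qed.

Lemma shift_ginf_drop g v k j : j <= size (gimg g (v k)) ->
  exists K, shift K (ginf g v) = wcat (drop j (gimg g (v k))) (ginf g (shift k.+1 v)).
Proof.
move=> H; case: (shift_ginf_shift g v k) => K HK; exists (K + j).
by rewrite -shiftD HK ginf_shift_cons shift_wcat_drop.
Qed.

Lemma suffixes_ginfP g v t : suffixes (ginf g v) t <-> exists k j,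
  j < size (gimg g (v k)) /\
  t = wcat (drop j (gimg g (v k))) (ginf g (shift k.+1 v)).
Proof.
split; first by case=> K ->; apply: shift_ginfE.
by case=> k [j [Hj ->]]; case: (shift_ginf_drop (ltnW Hj)) => K <-; exists K.
Qed.

Lemma after_ginfP g v b t : after b (ginf g v) t <-> exists k j,
  [/\ j < size (gimg g (v k)), nth false (gimg g (v k)) j = b &
  t = wcat (drop j.+1 (gimg g (v k))) (ginf g (shift k.+1 v))].
Proof.
have split_at K k j : j < size (gimg g (v k)) ->
    shift K (ginf g v) = wcat (drop j (gimg g (v k))) (ginf g (shift k.+1 v)) ->
    ginf g v K = nth false (gimg g (v k)) j /\
    shift K.+1 (ginf g v) = wcat (drop j.+1 (gimg g (v k))) (ginf g (shift k.+1 v)).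
  move=> Hj E; split.
  - by rewrite -shift_at0 E /wcat size_drop subn_gt0 Hj nth_drop addn0.
  - by rewrite -shiftS E shift_wcat_drop ?size_drop ?subn_gt0 // drop_drop add1n.
split.
- case=> K [HK ->]; case: (shift_ginfE g v K) => k [j [Hj E]].
  by case: (split_at _ _ _ Hj E) => H0 H1; exists k, j; split; rewrite -?H0.
- case=> k [j [Hj Hb ->]]; case: (shift_ginf_drop (ltnW Hj)) => K E.
  by case: (split_at _ _ _ Hj E) => H0 H1; exists K; rewrite H0.
Qed.

Definition nonexpansive (f : word -> word) :=
  forall n u v, agree n u v -> agree n (f u) (f v).

Lemma linf_image (S T : word -> Prop) f m :
  in_closure S m -> (forall s, S s -> T (f s)) -> nonexpansive f ->
  (forall t, T t -> lex_le (f m) t) -> linf T = f m.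
Proof.
move=> Hm ST Hf Hlb; apply/linfE/is_glb_closure => // n.
by case: (Hm n) => s [Ss As]; exists (f s); split; [apply: ST|apply: Hf].
Qed.

Lemma lsup_image (S T : word -> Prop) f m :
  in_closure S m -> (forall s, S s -> T (f s)) -> nonexpansive f ->
  (forall t, T t -> lex_le t (f m)) -> lsup T = f m.
Proof.
move=> Hm ST Hf Hub; apply/lsupE/is_lub_closure => // n.
by case: (Hm n) => s [Ss As]; exists (f s); split; [apply: ST|apply: Hf].
Qed.

Lemma nonexpansive_ginf g : nonexpansive (ginf g).
Proof. by move=> n u v; apply: ginf_agree. Qed.

Lemma nonexpansive_wcat_ginf b g : nonexpansive (fun s => wcat [:: b] (ginf g s)).
Proof.
by move=> n u v /(ginf_agree g) /(@wcat_agree [:: b]) H; apply: (agree_le _ H).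
Qed.

Lemma winf_le v k : lex_le (winf v) (shift k v).
Proof. exact/linf_le/suffixes_shift. Qed.

Lemma wsup_ge v k : lex_le (shift k v) (wsup v).
Proof. exact/lsup_ge/suffixes_shift. Qed.

Lemma winf1_le v k : v k = true -> lex_le (winf1 v) (shift k.+1 v).
Proof. by move=> H; apply: linf_le; exists k. Qed.

Lemma suffixes_const b t : suffixes (fun _ => b) t -> t = (fun _ => b).
Proof. by case=> k ->. Qed.

Lemma winf_const b : winf (fun _ => b) = (fun _ => b).
Proof.
apply/linfE/is_glb_closure => [t /suffixes_const ->|n]; first exact: lex_lexx.
by exists (fun _ => b); split => //; exists 0.
Qed.

Lemma wsup_const b : wsup (fun _ => b) = (fun _ => b).
Proof.
apply/lsupE/is_lub_closure => [t /suffixes_const ->|n]; first exact: lex_lexx.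
by exists (fun _ => b); split => //; exists 0.
Qed.

(* Over [zeros] the set [after true] is empty, so [winf1 zeros = ones]. *)
Lemma winf1_has1 v : winf v = winf1 v -> exists k, v k = true.
Proof.
case: (const_or_has false v) => // -> H; exfalso.
have E : winf1 zeros = ones.
  by apply: linfE; split => [t [k []] //|z _]; apply: ones_max.
by have := f_equal (fun x => x 0) H; rewrite winf_const E.
Qed.

Lemma wsup0_has0 v : wsup v = wsup0 v -> exists k, v k = false.
Proof.
case: (const_or_has true v) => // -> H; exfalso.
have E : wsup0 ones = zeros.
  by apply: lsupE; split => [t [k []] //|z _]; apply: zeros_min.
by have := f_equal (fun x => x 0) H; rewrite wsup_const E.
Qed.

Lemma winf_closure v : in_closure (suffixes v) (winf v).
Proof. by apply: linf_closure; exists v; apply: suffixes_refl. Qed.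

Lemma winf1_closure v : winf v = winf1 v -> in_closure (after true v) (winf1 v).
Proof.
by move/winf1_has1 => [k Hk]; apply: linf_closure; exists (shift k.+1 v), k.
Qed.

Lemma wsup0_closure v : wsup v = wsup0 v -> in_closure (after false v) (wsup0 v).
Proof.
by move/wsup0_has0 => [k Hk]; apply: lsup_closure; exists (shift k.+1 v), k.
Qed.

Lemma after_suffixes b u t : after b u t -> suffixes u t.
Proof. by case=> k [_ ->]; exists k.+1. Qed.

Lemma winf_image u (S : word -> Prop) f m :
  in_closure S m -> (forall s, S s -> after true u (f s)) -> nonexpansive f ->
  (forall t, suffixes u t -> lex_le (f m) t) -> winf u = f m /\ winf1 u = f m.
Proof.
move=> Hm ST Hf Hlb; split; apply: (linf_image Hm) => //.
- by move=> s /ST /after_suffixes.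
- by move=> t /after_suffixes /Hlb.
Qed.

Lemma wsup_image u (S : word -> Prop) f m :
  in_closure S m -> (forall s, S s -> after false u (f s)) -> nonexpansive f ->
  (forall t, suffixes u t -> lex_le t (f m)) -> wsup u = f m /\ wsup0 u = f m.
Proof.
move=> Hm ST Hf Hub; split; apply: (lsup_image Hm) => //.
- by move=> s /ST /after_suffixes.
- by move=> t /after_suffixes /Hub.
Qed.

Lemma winf_GL v : winf (ginf GL v) = ginf GL (winf v).
Proof.
apply: (linf_image (winf_closure v)).
- by move=> s [k ->]; apply: suffixes_ginf_shift.
- exact: nonexpansive_ginf.
- move=> t /suffixes_ginfP [k [[|j] [Hj ->]]].
    by rewrite drop0 -ginf_shift_cons; apply/lex_le_ginf/winf_le.
  case: (v k) Hj => //; case: j => //= _.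
  by apply/lex_ltW/lex_lt_head => //; apply: ginf_GL_at0.
Qed.

Lemma winf_GR v : winf (ginf GR v) = ginf GR (winf v).
Proof.
apply: (linf_image (winf_closure v)).
- by move=> s [k ->]; apply: suffixes_ginf_shift.
- exact: nonexpansive_ginf.
- move=> t /suffixes_ginfP [k [[|j] [Hj ->]]].
    by rewrite drop0 -ginf_shift_cons; apply/lex_le_ginf/winf_le.
  case E: (v k) Hj => //; case: j => //= _.
  rewrite -[wcat _ _]/(wcat (gfin GR [:: true]) _) -ginf_wcat; apply: lex_le_ginf.
  apply: (lex_le_trans (winf_le v k)); rewrite wcat_shift E.
  exact/lex_ltW/lex_lt_head.
Qed.

Lemma winf1_ginf_last g v : last false (gimg g true) = true ->
  winf (ginf g v) = ginf g (winf v) ->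
  winf v = winf1 v -> winf1 (ginf g v) = winf (ginf g v).
Proof.
move=> Hl Hw H; rewrite Hw H; apply: (proj2 (winf_image (winf1_closure H) _ _ _)).
- move=> s [k [Hk ->]]; apply/after_ginfP; exists k, (size (gimg g (v k))).-1.
  rewrite Hk prednK ?size_gimg_gt0 // drop_size wcat_nil nth_last Hl.
  by split => //; rewrite -Hk prednK ?size_gimg_gt0.
- exact: nonexpansive_ginf.
- by move=> t Ht; rewrite -H -Hw; apply: linf_le.
Qed.

Lemma lex_lt_wcat0_GM m x :
  lex_le m x -> lex_lt (wcat [:: false] (ginf GM m)) (ginf GM x).
Proof.
move=> H; case E: (x 0); first by apply: lex_lt_head => //; rewrite ginf_at0 E.
case Em: (m 0); first by have := lex_le_head H Em; rewrite E.
exists 1; split; first by move=> [|i] // _; rewrite ginf_at0 E.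
by rewrite /wcat /= ginf_at0 Em (ginf_cons GM x) E.
Qed.

Lemma winf_GM v : winf v = winf1 v ->
  winf (ginf GM v) = wcat [:: false] (ginf GM (winf v)) /\
  winf1 (ginf GM v) = wcat [:: false] (ginf GM (winf v)).
Proof.
move=> H; rewrite [in ginf GM (winf v)]H.
apply: (@winf_image _ _ (fun s => wcat [:: false] (ginf GM s)) _ (winf1_closure H)).
- move=> s [k [Hk ->]]; apply/after_ginfP; exists k, 0.
  by rewrite Hk.
- exact: nonexpansive_wcat_ginf.
- move=> t /suffixes_ginfP [k [[|j] [Hj ->]]].
    by rewrite drop0 -ginf_shift_cons -H; apply/lex_ltW/lex_lt_wcat0_GM/winf_le.
  case E: (v k) Hj => //; case: j => //= _.
    exact/lex_le_wcat/lex_le_ginf/winf1_le.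
  exact/lex_ltW/lex_lt_head.
Qed.

Lemma winf1_ginf g v : winf v = winf1 v -> winf1 (ginf g v) = winf (ginf g v).
Proof.
case: g => H.
- exact: winf1_ginf_last (winf_GL v) H.
- by case: (winf_GM H) => -> ->.
- exact: winf1_ginf_last (winf_GR v) H.
Qed.

Lemma wsup_has1 v k : v k = true -> wsup v = wcat [:: true] (lsup (after true v)).
Proof.
move=> Hk; have Hm : in_closure (after true v) (lsup (after true v)).
  by apply: lsup_closure; exists (shift k.+1 v), k.
apply/lsupE/is_lub_closure.
- move=> t [K ->]; rewrite -/(shift K v) wcat_shift; case E: (v K).
    by apply/lex_le_wcat/lsup_ge; exists K.
  exact/lex_ltW/lex_lt_head.
- move=> n; case: (Hm n) => t [[K [HK ->]] At]; exists (shift K v); split.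
    exact: suffixes_shift.
  by rewrite wcat_shift HK; apply: (agree_le _ (@wcat_agree [:: true] _ _ _ At)).
Qed.

Lemma wsup_GL_has1 v k : v k = true ->
  wsup (ginf GL v) = wcat [:: true] (ginf GL (lsup (after true v))) /\
  wsup0 (ginf GL v) = wcat [:: true] (ginf GL (lsup (after true v))).
Proof.
move=> Hk.
apply: (@wsup_image _ (after true v) (fun s => wcat [:: true] (ginf GL s))).
- by apply: lsup_closure; exists (shift k.+1 v), k.
- move=> s [k' [Hk' ->]]; apply/after_ginfP; exists k', 0.
  by rewrite Hk'.
- exact: nonexpansive_wcat_ginf.
- move=> t /suffixes_ginfP [k' [j [+ ->]]].
  case E: (v k') j => -[|[|j]] //= _; try exact/lex_ltW/lex_lt_head.
  by apply/lex_le_wcat/lex_le_ginf/lsup_ge; exists k'.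
Qed.

Lemma wsup_zeros : wsup zeros = zeros.
Proof. exact: wsup_const. Qed.

Lemma wsup_GL v : wcat [:: false] (wsup (ginf GL v)) = ginf GL (wsup v).
Proof.
case: (const_or_has false v) => [->|[k Hk]].
  rewrite -/zeros ginf_GL_zeros wsup_zeros ginf_GL_zeros.
  by apply: functional_extensionality => -[].
rewrite (wsup_has1 Hk) (proj1 (wsup_GL_has1 Hk)).
by rewrite ginf_wcat wcat_cat.
Qed.

Lemma wsup0_GL v : wsup0 (ginf GL v) = wsup (ginf GL v).
Proof.
case: (const_or_has false v) => [->|[k Hk]]; last by case: (wsup_GL_has1 Hk) => -> ->.
rewrite -/zeros ginf_GL_zeros wsup_zeros; apply/lsupE/is_lub_closure.
- by move=> t [k [_ ->]]; apply: lex_lexx.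
- by move=> n; exists zeros; split => //; exists 0.
Qed.

Lemma wsup_GR v : wsup v = wsup0 v ->
  wsup (ginf GR v) = wcat [:: true] (ginf GR (wsup v)) /\
  wsup0 (ginf GR v) = wcat [:: true] (ginf GR (wsup v)).
Proof.
move=> H; rewrite H.
apply: (@wsup_image _ (after false v) (fun s => wcat [:: true] (ginf GR s))).
- exact: wsup0_closure.
- move=> s [k [Hk ->]]; apply/after_ginfP; exists k, 0.
  by rewrite Hk.
- exact: nonexpansive_wcat_ginf.
- move=> t /suffixes_ginfP [k [j [+ ->]]].
  case E: (v k) j => -[|[|j]] //= _; try exact/lex_ltW/lex_lt_head;
    by apply/lex_le_wcat/lex_le_ginf; rewrite -H; apply: wsup_ge.
Qed.

Lemma wsup_GM v : wsup v = wsup0 v ->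
  wsup (ginf GM v) = wcat [:: true] (ginf GM (wsup v)) /\
  wsup0 (ginf GM v) = wcat [:: true] (ginf GM (wsup v)).
Proof.
move=> H; rewrite H.
apply: (@wsup_image _ (after false v) (fun s => wcat [:: true] (ginf GM s))).
- exact: wsup0_closure.
- move=> s [k [Hk ->]]; apply/after_ginfP; exists k, 0.
  by rewrite Hk.
- exact: nonexpansive_wcat_ginf.
- move=> t /suffixes_ginfP [k [j [+ ->]]].
  have Hk : lex_le (shift k.+1 v) (wsup0 v) by rewrite -H; apply: wsup_ge.
  case E: (v k) j => -[|[|j]] //= _; try exact/lex_ltW/lex_lt_head.
    rewrite -[[:: true; false]]/([:: true] ++ [:: false]) -wcat_cat.
    exact/lex_le_wcat/lex_ltW/lex_lt_wcat0_GM.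
  exact/lex_le_wcat/lex_le_ginf.
Qed.

Lemma wsup0_ginf g v : wsup v = wsup0 v -> wsup0 (ginf g v) = wsup (ginf g v).
Proof.
case: g => H; first exact: wsup0_GL.
- by case: (wsup_GM H) => -> ->.
- by case: (wsup_GR H) => -> ->.
Qed.

Lemma wsup_eq_wsup0_sinf s v :
  wsup v = wsup0 v -> wsup (sinf s v) = wsup0 (sinf s v).
Proof. by elim: s => //= g s IH /IH /wsup0_ginf. Qed.

Lemma winf_ginf_shape g : exists q w, gimg g true = q ++ true :: w /\
  forall v, winf v = winf1 v -> winf (ginf g v) = wcat w (ginf g (winf v)).
Proof.
case: g.
- by exists [:: false], [::]; split => // v _; rewrite wcat_nil winf_GL.
- by exists [::], [:: false]; split => // v /winf_GM [].
- by exists [::], [::]; split => // v _; rewrite wcat_nil winf_GR.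
Qed.

Lemma winf_sinf s : exists w, (exists p, sfin s [:: true] = p ++ true :: w) /\
  forall u, winf u = winf1 u ->
    winf1 (sinf s u) = winf (sinf s u) /\ winf (sinf s u) = wcat w (sinf s (winf u)).
Proof.
elim: s => [|g s [w [[p Hp] IH]]].
  by exists [::]; split; [exists [::] | move=> u H; rewrite wcat_nil].
case: (winf_ginf_shape g) => q [wg [Hq Hg]]; exists (wg ++ gfin g w); split.
  exists (gfin g p ++ q); rewrite /= Hp gfin_cat gfin_cons Hq.
  by rewrite -!catA.
move=> u H; have [H1 H2] := IH u H; rewrite /=; split.
  by apply: winf1_ginf; rewrite H1.
by rewrite Hg ?H1 // H2 ginf_wcat wcat_cat.
Qed.

Lemma wsup_ginf_shape g w : exists p w',
  gfin g (false :: true :: w) = p ++ false :: true :: w' /\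
  forall v x, wsup v = wsup0 v -> wsup v = wcat (true :: w) x ->
    wsup (ginf g v) = wcat (true :: w') (ginf g x).
Proof.
case: g.
- exists [:: false], (gfin GL w); split => // v x H E.
  by apply: (@wcat_inj [:: false]); rewrite wsup_GL E ginf_wcat wcat_cat.
- exists [::], (true :: false :: gfin GM w); split => // v x H E.
  by case: (wsup_GM H) => -> _; rewrite E ginf_wcat wcat_cat.
- exists [::], (true :: gfin GR w); split => // v x H E.
  by case: (wsup_GR H) => -> _; rewrite E ginf_wcat wcat_cat.
Qed.

Lemma wsup_sinf_MR t X : X = GM \/ X = GR ->
  exists p w, sfin (rcons t X) [:: false] = p ++ false :: true :: w /\
  forall u, wsup u = wsup0 u ->
    wsup (sinf (rcons t X) u) = wcat (true :: w) (sinf (rcons t X) (wsup u)).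
Proof.
move=> HX; elim: t => [|g t [p [w [Hp IH]]]].
  exists [::], [::]; split; first by case: HX => ->.
  by move=> u H /=; case: HX => ->; [case: (wsup_GM H) | case: (wsup_GR H)].
case: (wsup_ginf_shape g w) => p' [w' [Hp' Hg]]; exists (gfin g p ++ p'), w'; split.
  by rewrite rcons_cons /= Hp gfin_cat Hp' catA.
move=> u H; rewrite rcons_cons /=; apply: Hg; last exact: IH.
exact: wsup_eq_wsup0_sinf.
Qed.

Lemma gfin_rcons_01 g w : gimg g false = [:: false; true] ->
  gfin g (rcons w false) = rcons (gfin g w) false ++ [:: true].
Proof. by move=> H; rewrite -!cats1 gfin_cat gfin_cons H -catA. Qed.

(* The prefix ends with [0] because [M(0) = R(0) = 01] then provides the
   leading [1] of [sup (M u)] and [sup (R u)]. *)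
Lemma wsup_ginf_prefix_shape g w : exists w',
  (forall x, prefix_of_inf (rcons w false) x ->
     prefix_of_inf (rcons w' false) (ginf g x)) /\
  forall v, wsup v = wsup0 v ->
    ginf g (wcat (rcons w false) (wsup v)) = wcat (rcons w' false) (wsup (ginf g v)).
Proof.
case: g.
- exists (gfin GL (rcons w false)); split.
    move=> x Hx; rewrite (wcat_prefix Hx) ginf_wcat -cats1.
    by apply: prefix_of_inf_wcat => -[|i] //= _; rewrite ginf_GL_at0.
  by move=> v _; rewrite ginf_wcat -wsup_GL wcat_cat cats1.
- exists (gfin GM w); split.
    move=> x /(@prefix_of_inf_ginf GM).
    by rewrite gfin_rcons_01 //; apply: prefix_of_inf_catl.
  by move=> v /wsup_GM [-> _]; rewrite ginf_wcat gfin_rcons_01 // wcat_cat.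
- exists (gfin GR w); split.
    move=> x /(@prefix_of_inf_ginf GR).
    by rewrite gfin_rcons_01 //; apply: prefix_of_inf_catl.
  by move=> v /wsup_GR [-> _]; rewrite ginf_wcat gfin_rcons_01 // wcat_cat.
Qed.

Lemma wsup_sinf_L t :
  exists w, prefix_of_inf (rcons w false) (sinf (rcons t GL) zeros) /\
  forall u, wsup u = wsup0 u ->
    wcat (rcons w false) (wsup (sinf (rcons t GL) u)) = sinf (rcons t GL) (wsup u).
Proof.
elim: t => [|g t [w [Hp IH]]].
  exists [::]; split; first by move=> [|i] //= _; rewrite ginf_GL_zeros.
  by move=> u _ /=; rewrite wsup_GL.
case: (wsup_ginf_prefix_shape g w) => w' [Hpre Hg]; exists w'; split.
  by rewrite rcons_cons /=; apply: Hpre.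
move=> u H; rewrite rcons_cons /= -IH // Hg //.
exact: wsup_eq_wsup0_sinf.
Qed.

Theorem lemma2p3 :
  (forall u : word, winf (ginf GL u) = ginf GL (winf u)) /\
  (forall u : word, winf (ginf GR u) = ginf GR (winf u)) /\
  (forall u : word, wcat [:: false] (wsup (ginf GL u)) = ginf GL (wsup u)) /\
  (forall u : word, winf u = winf1 u ->
     winf (ginf GM u) = wcat [:: false] (ginf GM (winf u))) /\
  (forall u : word, wsup u = wsup0 u ->
     wsup (ginf GR u) = wcat [:: true] (ginf GR (wsup u)) /\
     wsup (ginf GM u) = wcat [:: true] (ginf GM (wsup u))) /\
  (* (a) *)
  (forall s : seq gen, exists w : seq bool,
     suffix w (sfin s [:: true]) /\
     forall u : word, winf u = winf1 u ->
       winf1 (sinf s u) = winf (sinf s u) /\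
       winf (sinf s u) = wcat w (sinf s (winf u))) /\
  (* (b) : sigma in {L,M,R}^* M  or  {L,M,R}^* R *)
  (forall (t : seq gen) (X : gen), (X = GM \/ X = GR) ->
     exists w : seq bool,
     suffix w (sfin (rcons t X) [:: false]) /\
     forall u : word, wsup u = wsup0 u ->
       wsup0 (sinf (rcons t X) u) = wsup (sinf (rcons t X) u) /\
       wsup (sinf (rcons t X) u) = wcat w (sinf (rcons t X) (wsup u))) /\
  (* (c) : sigma in {L,M,R}^* L *)
  (forall t : seq gen,
     exists w : seq bool,
     prefix_of_inf w (sinf (rcons t GL) zeros) /\
     forall u : word, wsup u = wsup0 u ->
       wcat w (wsup0 (sinf (rcons t GL) u)) = wcat w (wsup (sinf (rcons t GL) u)) /\
       wcat w (wsup (sinf (rcons t GL) u)) = sinf (rcons t GL) (wsup u)).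
Proof.
do 3 (split; first by [exact: winf_GL | exact: winf_GR | exact: wsup_GL]).
split; first by move=> u /winf_GM [].
split; first by move=> u H; split; [case: (wsup_GR H) | case: (wsup_GM H)].
split.
  move=> s; case: (winf_sinf s) => w [[p Hp] H]; exists w; split => //.
  by apply/suffixP; exists (rcons p true); rewrite Hp cat_rcons.
split.
  move=> t X HX; case: (wsup_sinf_MR t HX) => p [w [Hp H]]; exists (true :: w); split.
    by apply/suffixP; exists (rcons p false); rewrite Hp cat_rcons.
  by move=> u Hu; split; [rewrite (wsup_eq_wsup0_sinf _ Hu) | apply: H].
move=> t; case: (wsup_sinf_L t) => w [Hp H]; exists (rcons w false); split => //.
by move=> u Hu; split; [rewrite (wsup_eq_wsup0_sinf _ Hu) | apply: H].
Qed.
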